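(* Let $\varphi(\lambda,\mu,a_1,\dots,a_n)$ be a smooth function and let $M$ be an open subset of $\mathbb{R}^{2n}$ with coordinates $(\boldsymbol\lambda,\boldsymbol\mu)=(\lambda_1,\dots,\lambda_n,\mu_1,\dots,\mu_n)$ on which the system $$\varphi(\lambda_i,\mu_i,a_1,\dots,a_n)=0,\qquad i=1,\dots,n,$$ is solved for the parameters by smooth functions $a_k=h_k(\boldsymbol\lambda,\boldsymbol\mu)$, $k=1,\dots,n$, such that the $n\times n$ matrix $\left(\partial\varphi_s/\partial a_r\right)$, where $\varphi_s:=\varphi(\lambda_s,\mu_s,a_1,\dots,a_n)$, is invertible at $a=h(\boldsymbol\lambda,\boldsymbol\mu)$. Let $c(\lambda,\mu)$ be any $C^2$ function and let $$\pi=\sum_{i=1}^n c(\lambda_i,\mu_i)\frac{\partial}{\partial\lambda_i}\wedge\frac{\partial}{\partial\mu_i}.$$ Then $\{h_i,h_j\}_\pi=0$ for all $i,j=1,\dots,n$.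
   Context: The Poisson bracket of $\pi$ is $\{f,g\}_\pi=\sum_{k=1}^n\left(\frac{\partial f}{\partial\lambda_k}\frac{\partial g}{\partial\mu_k}-\frac{\partial f}{\partial\mu_k}\frac{\partial g}{\partial\lambda_k}\right)c(\lambda_k,\mu_k)$. *)

From HB Require Import structures.
From mathcomp Require Import all_boot all_order all_algebra.
From mathcomp Require Import all_classical all_reals all_analysis.
Set Implicit Arguments. Unset Strict Implicit. Unset Printing Implicit Defensive.
Import Order.TTheory GRing.Theory Num.Theory.
Import numFieldNormedType.Exports.
Local Open Scope classical_set_scope.
Local Open Scope ring_scope.

(* C^k on a set A (meant for open A): k-fold differentiability with all
   iterated directional derivatives continuous on A. *)
Fixpoint Ck_on {R : realType} {V : normedModType R} (A : set V) (k : nat)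
    (f : V -> R) : Prop :=
  match k with
  | 0 => forall x, A x -> {for x, continuous f}
  | k'.+1 => (forall x, A x -> differentiable f x) /\
             (forall v : V, Ck_on A k' (fun x => 'D_v f x))
  end.

Definition smooth_on {R : realType} {V : normedModType R} (A : set V)
    (f : V -> R) : Prop := forall k, Ck_on A k f.

Definition evec {R : realType} {n : nat} (k : 'I_n) : 'rV[R]_n := delta_mx 0 k.

(* Points of R^{2n} are pairs (lambda, mu) of row vectors. *)
Definition dlam {R : realType} {n : nat} (k : 'I_n)
    (f : 'rV[R]_n * 'rV[R]_n -> R) (p : 'rV[R]_n * 'rV[R]_n) : R :=
  'D_(evec k, 0) f p.
Definition dmu {R : realType} {n : nat} (k : 'I_n)
    (f : 'rV[R]_n * 'rV[R]_n -> R) (p : 'rV[R]_n * 'rV[R]_n) : R :=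
  'D_(0, evec k) f p.

Definition pbracket {R : realType} {n : nat} (c : R -> R -> R)
    (f g : 'rV[R]_n * 'rV[R]_n -> R) (p : 'rV[R]_n * 'rV[R]_n) : R :=
  \sum_(k < n) (dlam k f p * dmu k g p - dmu k f p * dlam k g p)
               * c (p.1 0 k) (p.2 0 k).

From HB Require Import structures.
From mathcomp Require Import all_boot all_order all_algebra ring.
From mathcomp Require Import all_classical all_reals all_analysis.
Import Order.TTheory GRing.Theory Num.Theory.
Import numFieldNormedType.Exports.
Local Open Scope classical_set_scope.
Local Open Scope ring_scope.

(* Differentiating the constraints phi(lambda_s, mu_s, h(lambda, mu)) = 0 along
   d/dlambda_k and d/dmu_k gives J L = -D1 and J U = -D2, where J is the
   invertible Jacobian (d phi_s / d a_r), L and U hold the lambda- and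
   mu-derivatives of the h_r, and D1, D2 are diagonal because phi_s only
   involves the s-th coordinates.  Hence L C U^T = J^-1 D1 C D2 J^-T is
   symmetric for every diagonal C, and {h_i, h_j} is the (i, j) entry of
   L C U^T - U C L^T for C = diag(c(lambda_k, mu_k)). *)

Section DiagonalRightHandSides.
Context {R : comUnitRingType} {n : nat} {A L U : 'M[R]_n} {d e : 'rV[R]_n}.
Hypotheses (unitA : A \in unitmx) (AL : A *m L = - diag_mx d)
  (AU : A *m U = - diag_mx e).

Lemma mulmx_diag_trmx_sym (c : 'rV[R]_n) :
  L *m diag_mx c *m U^T = U *m diag_mx c *m L^T.
Proof.
have -> : L = - (invmx A *m diag_mx d) by rewrite -mulmxN -AL mulKmx.
have -> : U = - (invmx A *m diag_mx e) by rewrite -mulmxN -AU mulKmx.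
rewrite !raddfN /= !mulNmx !opprK !trmx_mul !tr_diag_mx -!mulmxA.
congr (_ *m _); rewrite !mulmxA; congr (_ *m _); rewrite !mulmx_diag.
by congr diag_mx; apply/rowP => k; rewrite !mxE; ring.
Qed.

Lemma skew_diag_sum_eq0 (c : 'rV[R]_n) i j :
  \sum_k (L i k * U j k - U i k * L j k) * c 0 k = 0.
Proof.
have /matrixP/(_ i j) := mulmx_diag_trmx_sym c.
rewrite !mul_mx_diag !mxE => /eqP; rewrite -subr_eq0 -sumrB => /eqP sum0.
by rewrite -[RHS]sum0; apply: eq_bigr => k _; rewrite !mxE; ring.
Qed.

End DiagonalRightHandSides.

Section Derivatives.
Context {R : realType}.

Lemma differentiable_derive_linear {U W : normedModType R} (f : U -> W) x :
  linear f -> continuous f ->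
  differentiable f x /\ forall v, 'D_v f x = f v.
Proof.
move=> lf cf.
pose L : {linear U -> W} := HB.pack f (GRing.isLinear.Build _ _ _ _ f lf).
have -> : f = L by [].
have dL : differentiable L x by exact: linear_differentiable.
by split=> // v; rewrite deriveE // diff_lin.
Qed.

Lemma differentiable_derive_fst_coord {V : normedModType R} {m k : nat}
    (x : 'M[R]_(m, k) * V) i j :
  differentiable (fun y : 'M[R]_(m, k) * V => y.1 i j) x /\
  forall v, 'D_v (fun y : 'M[R]_(m, k) * V => y.1 i j) x = v.1 i j.
Proof.
apply: differentiable_derive_linear => [a y z|y]; first by rewrite /= !mxE.
apply: (@continuous_comp _ _ _ fst (fun M : 'M[R]_(m, k) => M i j) y).
  exact: cvg_fst.
exact: coord_continuous.
Qed.

Lemma differentiable_derive_snd_coord {V : normedModType R} {m k : nat}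
    (x : V * 'M[R]_(m, k)) i j :
  differentiable (fun y : V * 'M[R]_(m, k) => y.2 i j) x /\
  forall v, 'D_v (fun y : V * 'M[R]_(m, k) => y.2 i j) x = v.2 i j.
Proof.
apply: differentiable_derive_linear => [a y z|y]; first by rewrite /= !mxE.
apply: (@continuous_comp _ _ _ snd (fun M : 'M[R]_(m, k) => M i j) y).
  exact: cvg_snd.
exact: coord_continuous.
Qed.

Lemma differentiable_derive_row {V : normedModType R} {n : nat}
    (f : 'I_n -> V -> R) x :
  (forall k, differentiable (f k) x) ->
  differentiable (fun y => \row_k f k y) x /\
  forall v, 'D_v (fun y => \row_k f k y) x = \row_k 'D_v (f k) x.
Proof.
move=> df.
have drow : differentiable (fun y => \row_k f k y) x.
  have -> : (fun y => \row_k f k y) =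
      \sum_(k < n) (fun y => f k y *: (delta_mx 0 k : 'rV[R]_n)).
    apply/funext => y; rewrite fct_sumE [LHS]row_sum_delta.
    by apply: eq_bigr => k _; rewrite mxE.
  by apply: differentiable_sum => k; exact: differentiableZl.
split=> // v; rewrite derive_mx; last exact: diff_derivable.
by apply/rowP => k; rewrite !mxE; under eq_fun do rewrite mxE.
Qed.

Lemma derive_pair0 {U W T : normedModType R} (f : U * W -> T) u w e :
  'D_(0, e) f (u, w) = 'D_e (fun w' => f (u, w')) w.
Proof.
rewrite /derive /=.
suff -> : (fun t : R => t^-1 *: (f (t *: (0, e) + (u, w)) - f (u, w))) =
  (fun t : R => t^-1 *: (f (u, t *: e + w) - f (u, w))) by [].
apply/funext => t; congr (_ *: (f _ - _)).
by rewrite -[LHS]/(t *: 0 + u, t *: e + w) scaler0 add0r.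
Qed.

Lemma pair0_sum {V W : nmodType} {I : Type} (r : seq I) (P : pred I)
    (f : I -> W) :
  ((0 : V), \sum_(i <- r | P i) f i) = \sum_(i <- r | P i) (0, f i).
Proof.
elim/big_rec2: _ => // i _ y _ <-.
by rewrite -[RHS]/(0 + 0, f i + y) addr0.
Qed.

Lemma derive_pair_sum_delta {V : normedModType R} {n : nat}
    (F : V * 'rV[R]_n -> R) y u w : differentiable F y ->
  'D_(u, w) F y = 'D_(u, 0) F y + \sum_k w 0 k * 'D_(0, delta_mx 0 k) F y.
Proof.
move=> dF; rewrite !deriveE //.
have -> : (u, w) = (u, 0) + (0, w) by rewrite -[RHS]/(u + 0, 0 + w) addr0 add0r.
have -> : ((0 : V), w) = \sum_k w 0 k *: (0, delta_mx 0 k).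
  rewrite {1}[w]row_sum_delta pair0_sum; apply: eq_bigr => k _.
  by rewrite -[RHS]/(w 0 k *: 0, _) scaler0.
rewrite linearD linear_sum; congr (_ + _); apply: eq_bigr => k _.
by rewrite linearZ -deriveE.
Qed.

End Derivatives.

Section Constraint.
Context {R : realType} {n : nat}.
Variables (F : (R * R) * 'rV[R]_n -> R)
  (h : 'I_n -> 'rV[R]_n * 'rV[R]_n -> R) (p : 'rV[R]_n * 'rV[R]_n).

Let point (s : 'I_n) (q : 'rV[R]_n * 'rV[R]_n) :=
  ((q.1 0 s, q.2 0 s), \row_k h k q).

Hypotheses (dF : forall s, differentiable F (point s p))
  (dh : forall k, differentiable (h k) p)
  (F0 : forall s, \forall q \near p, F (point s q) = 0).

Lemma derive_constraint_eq0 s (v : 'rV[R]_n * 'rV[R]_n) :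
  'D_((v.1 0 s, v.2 0 s), 0) F (point s p) +
  \sum_r 'D_v (h r) p * 'D_(0, delta_mx 0 r) F (point s p) = 0.
Proof.
have [d1 D1] := differentiable_derive_fst_coord p 0 s.
have [d2 D2] := differentiable_derive_snd_coord p 0 s.
have [drow Drow] := differentiable_derive_row h p dh.
have dcoords :
    differentiable (fun q : 'rV[R]_n * 'rV[R]_n => (q.1 0 s, q.2 0 s)) p.
  exact: differentiable_pair d1 d2.
have dpoint : differentiable (point s) p.
  exact: differentiable_pair dcoords drow.
have : 'D_v (F \o point s) p = 0.
  by rewrite (near_eq_derive _ (F0 s)) derive_cst.
rewrite deriveE; last exact: differentiable_comp.
rewrite diff_comp //= diff_pair //.
rewrite (@diff_pair _ _ _ _ (fun q : 'rV[R]_n * 'rV[R]_n => q.1 0 s)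
  (fun q : 'rV[R]_n * 'rV[R]_n => q.2 0 s) p d1 d2) /= -!deriveE //.
rewrite D1 D2 Drow derive_pair_sum_delta // => eq0; rewrite -[RHS]eq0.
by congr (_ + _); apply: eq_bigr => r _; rewrite mxE.
Qed.

Definition constraint_jacobian : 'M[R]_n :=
  \matrix_(s, r) 'D_(0, delta_mx 0 r) F (point s p).

Lemma constraint_jacobian_mul_derive (dir : 'I_n -> 'rV[R]_n * 'rV[R]_n) u :
  (forall s k, ((dir k).1 0 s, (dir k).2 0 s) = if s == k then u else 0) ->
  constraint_jacobian *m (\matrix_(r, k) 'D_(dir k) (h r) p) =
  - diag_mx (\row_s 'D_(u, 0) F (point s p)).
Proof.
move=> dir_coord; apply/matrixP => s k; rewrite !mxE.
have /eqP := derive_constraint_eq0 s (dir k).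
rewrite addrC addr_eq0 dir_coord => /eqP sum_eq.
under eq_bigr do rewrite !mxE mulrC.
(* Both sides only agree up to canonical-instance unfolding, which [done]
   explores very slowly; [reflexivity] closes them at once. *)
rewrite sum_eq; case: eqP => _.
  by rewrite mulr1n; reflexivity.
have zero_dir : ((0 : R * R), (0 : 'rV[R]_n)) = 0 by [].
by rewrite zero_dir derive0 mulr0n oppr0; reflexivity.
Qed.

Lemma constraint_jacobian_mul_dlam :
  constraint_jacobian *m (\matrix_(r, k) dlam k (h r) p) =
  - diag_mx (\row_s 'D_((1, 0), 0) F (point s p)).
Proof.
by apply: constraint_jacobian_mul_derive => s k; rewrite !mxE eqxx; case: eqP.
Qed.

Lemma constraint_jacobian_mul_dmu :
  constraint_jacobian *m (\matrix_(r, k) dmu k (h r) p) =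
  - diag_mx (\row_s 'D_((0, 1), 0) F (point s p)).
Proof.
by apply: constraint_jacobian_mul_derive => s k; rewrite !mxE eqxx; case: eqP.
Qed.

End Constraint.

Theorem theorem4 (R : realType) (n : nat)
  (phi : R -> R -> 'rV[R]_n -> R)
  (M : set ('rV[R]_n * 'rV[R]_n))
  (h : 'I_n -> 'rV[R]_n * 'rV[R]_n -> R)
  (c : R -> R -> R) :
  smooth_on setT (fun x : (R * R) * 'rV[R]_n => phi x.1.1 x.1.2 x.2) ->
  open M ->
  (forall k, smooth_on M (h k)) ->
  (forall p, M p -> forall i : 'I_n,
     phi (p.1 0 i) (p.2 0 i) (\row_k h k p) = 0) ->
  (forall p, M p ->
     (\matrix_(s < n, r < n)
        'D_(evec r) (phi (p.1 0 s) (p.2 0 s)) (\row_k h k p)) \in unitmx) ->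
  Ck_on setT 2 (fun x : R * R => c x.1 x.2) ->
  forall i j : 'I_n, forall p, M p -> pbracket c (h i) (h j) p = 0.
Proof.
move=> phi_smooth M_open h_smooth h_solves jac_unit _ i j p Mp.
pose F := fun x : (R * R) * 'rV[R]_n => phi x.1.1 x.1.2 x.2.
have dF y : differentiable F y := (phi_smooth 1%N).1 y I.
have dh k : differentiable (h k) p := (h_smooth k 1%N).1 p Mp.
have F0 (s : 'I_n) : nbhs p (fun q : 'rV[R]_n * 'rV[R]_n =>
    F ((q.1 0 s, q.2 0 s), \row_k h k q) = 0).
  have nbhsM : nbhs p M by move: M_open; rewrite openE; exact.
  by apply: filterS nbhsM => q Mq; exact: h_solves.
have jac_unitF : constraint_jacobian F h p \in unitmx.
  suff -> : constraint_jacobian F h p =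
      \matrix_(s, r) 'D_(evec r) (phi (p.1 0 s) (p.2 0 s)) (\row_k h k p).
    exact: jac_unit.
  by apply/matrixP => s r; rewrite !mxE derive_pair0.
have := skew_diag_sum_eq0 jac_unitF
  (constraint_jacobian_mul_dlam F h p (fun=> dF _) dh F0)
  (constraint_jacobian_mul_dmu F h p (fun=> dF _) dh F0)
  (\row_k c (p.1 0 k) (p.2 0 k)) i j.
by under eq_bigr do rewrite !mxE.
Qed.
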